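(* Let $(H,\Lambda,\lambda)$ be an integral Hopf algebra in a strict symmetric monoidal category $\mathcal{C}$, with multiplication $\mu$, comultiplication $\Delta$ and antipode $s$. Define $\beta:=\lambda\circ\mu\colon H\otimes H\to I$ and $\gamma:=(s\otimes\mathrm{id}_H)\circ\Delta\circ\Lambda\colon I\to H\otimes H$. Then $H$ is nondegenerate, i.e. both $(\mathrm{id}_H\otimes\beta)\circ(\gamma\otimes\mathrm{id}_H)=\mathrm{id}_H$ and $(\beta\otimes\mathrm{id}_H)\circ(\mathrm{id}_H\otimes\gamma)=\mathrm{id}_H$ hold, if and only if $\lambda\circ s\circ\Lambda=\mathrm{id}_I$.
   Context: $\mathcal{C}$ is a strict symmetric monoidal category with unit object $I$ and symmetry $\sigma$. A Hopf algebra $(H,\mu,\eta,\Delta,\varepsilon,s)$ in $\mathcal{C}$ consists of an object $H$, an associative unital monoid $\mu\colon H\otimes H\to H$, $\eta\colon I\to H$, a coassociative counital comonoid $\Delta\colon H\to H\otimes H$, $\varepsilon\colon H\to I$, satisfying $\Delta\circ\mu=(\mu\otimes\mu)\circ(\mathrm{id}_H\otimes\sigma_{H,H}\otimes\mathrm{id}_H)\circ(\Delta\otimes\Delta)$, $\Delta\circ\eta=\eta\otimes\eta$, $\varepsilon\circ\mu=\varepsilon\otimes\varepsilon$, $\varepsilon\circ\eta=\mathrm{id}_I$, and an antipode $s\colon H\to H$ with $\mu\circ(s\otimes\mathrm{id}_H)\circ\Delta=\eta\circ\varepsilon=\mu\circ(\mathrm{id}_H\otimes s)\circ\Delta$. A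 left cointegral is a point $\Lambda\colon I\to H$ with $\mu\circ(\Lambda\otimes\mathrm{id}_H)=\Lambda\circ\varepsilon$; a right integral is a copoint $\lambda\colon H\to I$ with $(\mathrm{id}_H\otimes\lambda)\circ\Delta=\eta\circ\lambda$. An integral Hopf algebra $(H,\Lambda,\lambda)$ is a Hopf algebra with a chosen left cointegral $\Lambda$ and right integral $\lambda$ such that $\lambda\circ\Lambda=\mathrm{id}_I$. *)

(* This lets
   strictness be expressed as plain equations between objects, without
   dependent casts on hom-types. *)

Record SSMC := {
  ob : Type;
  mor : Type;
  dom : mor -> ob;
  cod : mor -> ob;
  idm : ob -> mor;
  comp : mor -> mor -> mor;            (* comp g f = g o f *)
  tens_ob : ob -> ob -> ob;
  unit_ob : ob;
  tens : mor -> mor -> mor;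
  sym : ob -> ob -> mor;
  dom_id : forall a, dom (idm a) = a;
  cod_id : forall a, cod (idm a) = a;
  dom_comp : forall f g, cod f = dom g -> dom (comp g f) = dom f;
  cod_comp : forall f g, cod f = dom g -> cod (comp g f) = cod g;
  comp_id_l : forall f, comp (idm (cod f)) f = f;
  comp_id_r : forall f, comp f (idm (dom f)) = f;
  comp_assoc : forall f g h, cod f = dom g -> cod g = dom h ->
      comp h (comp g f) = comp (comp h g) f;
  dom_tens : forall f g, dom (tens f g) = tens_ob (dom f) (dom g);
  cod_tens : forall f g, cod (tens f g) = tens_ob (cod f) (cod g);
  tens_ob_assoc : forall a b c, tens_ob (tens_ob a b) c = tens_ob a (tens_ob b c);
  tens_ob_unit_l : forall a, tens_ob unit_ob a = a;
  tens_ob_unit_r : forall a, tens_ob a unit_ob = a;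
  tens_assoc : forall f g h, tens (tens f g) h = tens f (tens g h);
  tens_unit_l : forall f, tens (idm unit_ob) f = f;
  tens_unit_r : forall f, tens f (idm unit_ob) = f;
  tens_id : forall a b, tens (idm a) (idm b) = idm (tens_ob a b);
  interchange : forall f g f' g', cod f = dom f' -> cod g = dom g' ->
      comp (tens f' g') (tens f g) = tens (comp f' f) (comp g' g);
  dom_sym : forall a b, dom (sym a b) = tens_ob a b;
  cod_sym : forall a b, cod (sym a b) = tens_ob b a;
  sym_nat : forall f g,
      comp (sym (cod f) (cod g)) (tens f g) = comp (tens g f) (sym (dom f) (dom g));
  sym_inv : forall a b, comp (sym b a) (sym a b) = idm (tens_ob a b);
  sym_hex : forall a b c,
      sym a (tens_ob b c) = comp (tens (idm b) (sym a c)) (tens (sym a b) (idm c))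
}.

Arguments dom {_}. Arguments cod {_}. Arguments idm {_}. Arguments comp {_}.
Arguments tens_ob {_}. Arguments unit_ob {_}. Arguments tens {_}. Arguments sym {_}.

Section Hopf.
Variable C : SSMC.

Definition is_hom (f : mor C) (a b : ob C) : Prop := dom f = a /\ cod f = b.

Variables (H : ob C) (mu eta Delta eps s : mor C).

Let I := @unit_ob C.
Let HH := tens_ob H H.
Let idH := idm H.

Definition is_hopf_algebra : Prop :=
  (is_hom mu HH H /\ is_hom eta I H /\ is_hom Delta H HH /\ is_hom eps H I
    /\ is_hom s H H) /\
  comp mu (tens mu idH) = comp mu (tens idH mu) /\
  comp mu (tens eta idH) = idH /\ comp mu (tens idH eta) = idH /\
  comp (tens Delta idH) Delta = comp (tens idH Delta) Delta /\
  comp (tens eps idH) Delta = idH /\ comp (tens idH eps) Delta = idH /\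
  comp Delta mu =
    comp (tens mu mu) (comp (tens idH (tens (sym H H) idH)) (tens Delta Delta)) /\
  comp Delta eta = tens eta eta /\
  comp eps mu = tens eps eps /\
  comp eps eta = idm I /\
  comp mu (comp (tens s idH) Delta) = comp eta eps /\
  comp mu (comp (tens idH s) Delta) = comp eta eps.

Variables (Lam lam : mor C).

Definition is_left_cointegral : Prop :=
  is_hom Lam I H /\ comp mu (tens Lam idH) = comp Lam eps.

Definition is_right_integral : Prop :=
  is_hom lam H I /\ comp (tens idH lam) Delta = comp eta lam.

Definition is_integral_hopf_algebra : Prop :=
  is_hopf_algebra /\ is_left_cointegral /\ is_right_integral /\
  comp lam Lam = idm I.

Definition beta : mor C := comp lam mu.
Definition gamma : mor C := comp (tens s idH) (comp Delta Lam).

Definition nondegenerate : Prop :=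
  comp (tens idH beta) (tens gamma idH) = idH /\
  comp (tens beta idH) (tens idH gamma) = idH.

End Hopf.

(* The map [T : x |-> Lam_1 lam(Lam_2 x)] is a two-sided inverse of the antipode [S]:
   [S o T = id] follows from the integral property of [lam] and the antipode axiom,
   [T o S = id] from the sliding rule [Lam_1 x (x) Lam_2 = Lam_1 (x) Lam_2 S(x)].
   The first nondegeneracy composite is [S o T], hence always the identity.  Through [T]
   one also gets that [S] is anti-multiplicative and anti-comultiplicative, and then that
   [Lam_1 lam(S(Lam_2)) = lam(S(Lam)) 1]; with these the second composite reduces to
   [lam(S(Lam)) id_H], which is the identity iff the scalar [lam(S(Lam))] is (apply
   [eps (-) eta]). *)

From Stdlib Require Import List Arith Lia Bool.
Import ListNotations.

Arguments dom_comp {_}. Arguments cod_comp {_}.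
Arguments sym_nat {_}. Arguments sym_inv {_}. Arguments sym_hex {_}.

Section MonoidalFacts.
Context {C : SSMC}.
Implicit Types (a b c : ob C) (f g : mor C).

Lemma comp_idm_l a f : cod f = a -> comp (idm a) f = f.
Proof. intros <-; apply comp_id_l. Qed.

Lemma comp_idm_r a f : dom f = a -> comp f (idm a) = f.
Proof. intros <-; apply comp_id_r. Qed.

Lemma tens_idm_comp_l c f g : cod g = dom f ->
  tens (idm c) (comp f g) = comp (tens (idm c) f) (tens (idm c) g).
Proof.
  intros h. rewrite interchange by (rewrite ?cod_id, ?dom_id; auto).
  rewrite comp_idm_l; auto using cod_id.
Qed.

Lemma tens_idm_comp_r c f g : cod g = dom f ->
  tens (comp f g) (idm c) = comp (tens f (idm c)) (tens g (idm c)).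
Proof.
  intros h. rewrite interchange by (rewrite ?cod_id, ?dom_id; auto).
  rewrite comp_idm_l; auto using cod_id.
Qed.

Lemma tens_split_l f g : tens f g = comp (tens f (idm (cod g))) (tens (idm (dom f)) g).
Proof.
  rewrite interchange by (rewrite ?cod_id, ?dom_id; auto).
  rewrite comp_id_l, comp_id_r; auto.
Qed.

Lemma tens_split_r f g : tens f g = comp (tens (idm (cod f)) g) (tens f (idm (dom g))).
Proof.
  rewrite interchange by (rewrite ?cod_id, ?dom_id; auto).
  rewrite comp_id_l, comp_id_r; auto.
Qed.

Lemma sym_unit_r a : sym a unit_ob = idm a.
Proof.
  assert (hex := sym_hex a unit_ob unit_ob).
  rewrite tens_ob_unit_l, tens_unit_l, tens_unit_r in hex.
  assert (inv := sym_inv a unit_ob). rewrite tens_ob_unit_r in inv.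
  rewrite <- (comp_idm_l a (sym a unit_ob)) by (rewrite cod_sym, tens_ob_unit_l; auto).
  rewrite <- inv at 1.
  rewrite <- comp_assoc, <- hex; auto;
    rewrite ?cod_sym, ?dom_sym, ?tens_ob_unit_l, ?tens_ob_unit_r; auto.
Qed.

Lemma sym_unit_l a : sym unit_ob a = idm a.
Proof.
  assert (inv := sym_inv a unit_ob). rewrite tens_ob_unit_r, sym_unit_r in inv.
  rewrite <- inv, comp_idm_r; auto. rewrite dom_sym, tens_ob_unit_l; auto.
Qed.

Lemma sym_point_l f b : dom f = unit_ob ->
  comp (sym (cod f) b) (tens f (idm b)) = tens (idm b) f.
Proof.
  intros hf. assert (nat := sym_nat f (idm b)).
  rewrite cod_id, dom_id, hf, sym_unit_l in nat. rewrite nat.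
  apply comp_idm_r. rewrite dom_tens, dom_id, hf, tens_ob_unit_r; auto.
Qed.

Lemma sym_copoint_r f b : cod f = unit_ob ->
  comp (tens (idm b) f) (sym (dom f) b) = tens f (idm b).
Proof.
  intros hf. assert (nat := sym_nat f (idm b)).
  rewrite cod_id, dom_id, hf, sym_unit_l in nat. rewrite <- nat.
  apply comp_idm_l. rewrite cod_tens, cod_id, hf, tens_ob_unit_l; auto.
Qed.

Lemma sym_copoint_l f a : cod f = unit_ob ->
  comp (tens f (idm a)) (sym a (dom f)) = tens (idm a) f.
Proof.
  intros hf. assert (nat := sym_nat (idm a) f).
  rewrite cod_id, dom_id, hf, sym_unit_r in nat. rewrite <- nat.
  apply comp_idm_l. rewrite cod_tens, cod_id, hf, tens_ob_unit_r; auto.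
Qed.

(* [k = k (x) (q o p) = q o (k (x) id_a) o p = q o p]. *)
Lemma scalar_idm_of_tens_idm (k : mor C) a (p q : mor C) :
  dom k = unit_ob -> cod k = unit_ob -> dom p = unit_ob -> cod p = a ->
  dom q = a -> cod q = unit_ob -> comp q p = idm unit_ob ->
  tens k (idm a) = idm a -> k = idm unit_ob.
Proof.
  intros dk ck dp cp dq cq qp hk.
  assert (kp : tens k p = p).
  { transitivity (comp (tens k (idm a)) (tens (idm unit_ob) p)).
    - rewrite interchange by (rewrite ?cod_id, ?dom_id; congruence).
      rewrite comp_idm_r, comp_idm_l; auto.
    - rewrite hk, tens_unit_l. apply comp_idm_l; auto. }
  transitivity (comp (tens (idm unit_ob) q) (tens k p)).
  - rewrite interchange by (rewrite ?cod_id, ?dom_id; congruence).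
    rewrite comp_idm_l, qp, tens_unit_r; auto.
  - rewrite kp, tens_unit_l; auto.
Qed.

End MonoidalFacts.

(* Rewriting a diagram by
   an equation between diagrams, and interchanging independent layers, are checked by
   computation on the list of layers; this absorbs all the associativity, unit and
   interchange bookkeeping of the strict monoidal structure. *)
Record signature := {
  gen :> Type;
  gen_eqb : gen -> gen -> bool;
  gen_eqb_eq : forall a b, gen_eqb a b = true -> a = b;
  arity_in : gen -> nat;
  arity_out : gen -> nat }.

Arguments gen_eqb {_}. Arguments gen_eqb_eq {_}. Arguments arity_in {_}. Arguments arity_out {_}.

Section DiagramSyntax.
Variable sg : signature.

Definition layer := (nat * sg * nat)%type.
Definition diagram := list layer.

Definition layer_in (x : layer) := let '(k, a, j) := x in k + (arity_in a + j).
Definition layer_out (x : layer) := let '(k, a, j) := x in k + (arity_out a + j).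

Definition layer_eqb (x y : layer) :=
  let '(k, a, j) := x in let '(k', a', j') := y in
  Nat.eqb k k' && gen_eqb a a' && Nat.eqb j j'.

Fixpoint diagram_eqb (d d' : diagram) := match d, d' with
  | [], [] => true
  | x :: d, y :: d' => layer_eqb x y && diagram_eqb d d'
  | _, _ => false end.

Lemma diagram_eqb_eq d d' : diagram_eqb d d' = true -> d = d'.
Proof.
  revert d'; induction d as [|[[k a] j] d IH]; intros [|[[k' a'] j'] d'] h; try easy.
  simpl in h. apply andb_prop in h as [h h']. apply andb_prop in h as [h hj].
  apply andb_prop in h as [hk ha].
  apply Nat.eqb_eq in hk, hj. apply gen_eqb_eq in ha. subst; f_equal; auto.
Qed.

Fixpoint diag_wf (w : nat) (d : diagram) : bool := match d with
  | [] => true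
  | x :: d => Nat.eqb (layer_in x) w && diag_wf (layer_out x) d end.

Fixpoint diag_out (w : nat) (d : diagram) : nat := match d with
  | [] => w
  | x :: d => diag_out (layer_out x) d end.

Lemma diag_wf_app w d1 d2 : diag_wf w (d1 ++ d2) = diag_wf w d1 && diag_wf (diag_out w d1) d2.
Proof. revert w; induction d1; intros w; simpl; auto. rewrite IHd1, andb_assoc; auto. Qed.

Definition layer_shift k j (x : layer) : layer := let '(k', a, j') := x in (k + k', a, j' + j).

Lemma layer_in_shift k j x : layer_in (layer_shift k j x) = k + (layer_in x + j).
Proof. destruct x as [[k' a] j']; simpl; lia. Qed.

Lemma layer_out_shift k j x : layer_out (layer_shift k j x) = k + (layer_out x + j).
Proof. destruct x as [[k' a] j']; simpl; lia. Qed.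

Lemma diag_wf_shift k j w d :
  diag_wf w d = true -> diag_wf (k + (w + j)) (map (layer_shift k j) d) = true.
Proof.
  revert w; induction d; intros w h; simpl in *; auto.
  apply andb_prop in h as [h1 h2]. apply Nat.eqb_eq in h1.
  rewrite layer_in_shift, layer_out_shift, h1, Nat.eqb_refl; simpl; auto.
Qed.

Lemma diag_out_shift k j w d :
  diag_out (k + (w + j)) (map (layer_shift k j) d) = k + (diag_out w d + j).
Proof. revert w; induction d; intros w; simpl; auto. rewrite layer_out_shift; auto. Qed.

(* The interchange law for two consecutive layers; [None] if their generators share a wire. *)
Definition interchange_layers (x1 x2 : layer) : option (layer * layer) :=
  let '(k1, a1, j1) := x1 in let '(k2, a2, j2) := x2 in
  if k1 + arity_out a1 <=? k2 then
    let g := k2 - (k1 + arity_out a1) in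
    Some ((k1 + (arity_in a1 + g), a2, j2), (k1, a1, g + (arity_out a2 + j2)))
  else if k2 + arity_in a2 <=? k1 then
    let g := k1 - (k2 + arity_in a2) in
    Some ((k2, a2, g + (arity_in a1 + j1)), (k2 + (arity_out a2 + g), a1, j1))
  else None.

Fixpoint diag_swap (i : nat) (d : diagram) : diagram :=
  match i, d with
  | 0, x1 :: x2 :: r =>
      match interchange_layers x1 x2 with Some (y1, y2) => y1 :: y2 :: r | None => d end
  | S i, x :: r => x :: diag_swap i r
  | _, _ => d end.

Definition diag_replace i k j (d1 d2 d : diagram) :=
  firstn i d ++ map (layer_shift k j) d2 ++ skipn (i + length d1) d.

Definition diag_match w0 w i k j d1 (d : diagram) :=
  diagram_eqb (firstn (length d1) (skipn i d)) (map (layer_shift k j) d1)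
  && Nat.eqb (diag_out w (firstn i d)) (k + (w0 + j)).

Definition shift_between (x y : layer) :=
  let '(k, _, j) := x in let '(k', _, j') := y in (k - k', j - j').

(* Locates the occurrence number [occ] (counting from [0]) of [d1] in [d]; the shift of a
   candidate is read off its first layer and then checked by [diag_match]. *)
Fixpoint diag_find w0 w d1 d occ i fuel : option (nat * nat * nat) :=
  match fuel with 0 => None | S fuel =>
    match nth_error d i, d1 with
    | Some x, y :: _ =>
        let (k, j) := shift_between x y in
        if diag_match w0 w i k j d1 d then
          match occ with
          | 0 => Some (i, k, j)
          | S occ => diag_find w0 w d1 d occ (S i) fuel end
        else diag_find w0 w d1 d occ (S i) fuel
    | _, _ => None end end.

Lemma diag_find_match w0 w d1 d occ i fuel i' k j :
  diag_find w0 w d1 d occ i fuel = Some (i', k, j) -> diag_match w0 w i' k j d1 d = true.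
Proof.
  revert occ i; induction fuel; intros occ i h; simpl in h; try easy.
  destruct (nth_error d i); [|easy]. destruct d1 as [|y d1']; [easy|].
  destruct (shift_between l y) as [k0 j0].
  destruct (diag_match w0 w i k0 j0 (y :: d1') d) eqn:E.
  - destruct occ; [inversion h; subst; auto | eapply IHfuel; eauto].
  - eapply IHfuel; eauto.
Qed.

Definition diag_rewrite w0 w d1 d2 d occ :=
  match diag_find w0 w d1 d occ 0 (S (length d)) with
  | Some (i, k, j) => diag_replace i k j d1 d2 d
  | None => d end.

Definition diag_insert w0 w i k j d1 d2 d :=
  if diag_match w0 w i k j d1 d then diag_replace i k j d1 d2 d else d.

End DiagramSyntax.

Fixpoint tpow {C : SSMC} (H : ob C) (k : nat) : ob C :=
  match k with 0 => unit_ob | 1 => H | S k' => tens_ob H (tpow H k') end.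

Lemma tpow_S {C : SSMC} (H : ob C) k : tpow H (S k) = tens_ob H (tpow H k).
Proof. destruct k; simpl; [rewrite tens_ob_unit_r|]; reflexivity. Qed.

Lemma tens_ob_tpow {C : SSMC} (H : ob C) a b : tens_ob (tpow H a) (tpow H b) = tpow H (a + b).
Proof.
  induction a; [simpl; rewrite tens_ob_unit_l; auto|].
  simpl plus. rewrite !tpow_S, tens_ob_assoc, IHa; auto.
Qed.

Section DiagramSemantics.
Variables (C : SSMC) (H : ob C) (sg : signature) (gen_mor : sg -> mor C).
Hypotheses (dom_gen : forall a, dom (gen_mor a) = tpow H (arity_in a))
  (cod_gen : forall a, cod (gen_mor a) = tpow H (arity_out a)).

(* A layer [(k, a, j)] is the generator [a] with [k] wires on its left and [j] on its
   right; a diagram lists its layers in the order in which they are applied. *)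
Definition layer_mor (x : layer sg) :=
  let '(k, a, j) := x in tens (idm (tpow H k)) (tens (gen_mor a) (idm (tpow H j))).

Fixpoint diag_mor w (d : diagram sg) := match d with
  | [] => idm (tpow H w)
  | x :: d => comp (diag_mor (layer_out sg x) d) (layer_mor x) end.

Lemma dom_layer_mor x : dom (layer_mor x) = tpow H (layer_in sg x).
Proof.
  destruct x as [[k a] j]; simpl. rewrite !dom_tens, !dom_id, dom_gen, !tens_ob_tpow; auto.
Qed.

Lemma cod_layer_mor x : cod (layer_mor x) = tpow H (layer_out sg x).
Proof.
  destruct x as [[k a] j]; simpl. rewrite !cod_tens, !cod_id, cod_gen, !tens_ob_tpow; auto.
Qed.

Lemma diag_mor_typed w d : diag_wf sg w d = true ->
  dom (diag_mor w d) = tpow H w /\ cod (diag_mor w d) = tpow H (diag_out sg w d).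
Proof.
  revert w; induction d as [|x d IH]; intros w h; simpl in *.
  - rewrite dom_id, cod_id; auto.
  - apply andb_prop in h as [h1 h2]. apply Nat.eqb_eq in h1.
    destruct (IH _ h2) as [IH1 IH2].
    rewrite dom_comp, cod_comp by (rewrite cod_layer_mor; auto).
    rewrite dom_layer_mor, h1; auto.
Qed.

Lemma diag_mor_app w d1 d2 : diag_wf sg w (d1 ++ d2) = true ->
  diag_mor w (d1 ++ d2) = comp (diag_mor (diag_out sg w d1) d2) (diag_mor w d1).
Proof.
  revert w; induction d1 as [|x d1 IH]; intros w h; simpl in *.
  - symmetry; apply comp_idm_r, diag_mor_typed; auto.
  - apply andb_prop in h as [h1 h2]. rewrite IH by auto.
    rewrite diag_wf_app in h2. apply andb_prop in h2 as [h2 h3].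
    symmetry; apply comp_assoc.
    + rewrite cod_layer_mor. symmetry; apply diag_mor_typed; auto.
    + rewrite (proj2 (diag_mor_typed _ _ h2)). symmetry; apply diag_mor_typed; auto.
Qed.

Ltac split_idm := repeat rewrite <- tens_ob_tpow; repeat rewrite <- tens_id;
  repeat rewrite tens_assoc.

Ltac typecheck := repeat first [
    match goal with h : dom ?f = _ |- context [dom ?f] => rewrite h end
  | match goal with h : cod ?f = _ |- context [cod ?f] => rewrite h end
  | rewrite dom_tens | rewrite cod_tens | rewrite dom_id | rewrite cod_id
  | rewrite dom_gen | rewrite cod_gen | rewrite dom_layer_mor | rewrite cod_layer_mor
  | rewrite tens_ob_tpow ];
  try reflexivity; try (f_equal; simpl; lia).

Lemma layer_mor_shift k j x :
  layer_mor (layer_shift sg k j x) = tens (idm (tpow H k)) (tens (layer_mor x) (idm (tpow H j))).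
Proof. destruct x as [[k' a] j']; simpl. split_idm. auto. Qed.

Lemma diag_mor_shift k j w d : diag_wf sg w d = true ->
  diag_mor (k + (w + j)) (map (layer_shift sg k j) d)
  = tens (idm (tpow H k)) (tens (diag_mor w d) (idm (tpow H j))).
Proof.
  revert w; induction d as [|x d IH]; intros w h; simpl map; cbn [diag_mor].
  - split_idm; auto.
  - simpl in h. apply andb_prop in h as [h1 h2]. apply Nat.eqb_eq in h1.
    rewrite layer_out_shift, IH, layer_mor_shift by auto.
    destruct (diag_mor_typed _ _ h2) as [t1 t2].
    rewrite interchange by typecheck. rewrite interchange by typecheck.
    rewrite (comp_idm_l _ (idm (tpow H k))), (comp_idm_l _ (idm (tpow H j))) by typecheck.
    auto.
Qed.

Lemma diag_mor_app3 w p q r : diag_wf sg w (p ++ q ++ r) = true ->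
  diag_mor w (p ++ q ++ r)
  = comp (diag_mor (diag_out sg (diag_out sg w p) q) r)
      (comp (diag_mor (diag_out sg w p) q) (diag_mor w p)).
Proof.
  intros h. rewrite diag_mor_app by auto. rewrite diag_wf_app in h.
  apply andb_prop in h as [h1 h2].
  rewrite diag_mor_app by auto. rewrite diag_wf_app in h2. apply andb_prop in h2 as [h2 h3].
  destruct (diag_mor_typed _ _ h1) as [a1 a2]. destruct (diag_mor_typed _ _ h2) as [b1 b2].
  destruct (diag_mor_typed _ _ h3) as [c1 c2].
  symmetry; apply comp_assoc; congruence.
Qed.

Section Rewriting.
Variables (w0 : nat) (d1 d2 : diagram sg).
Hypotheses (d12 : diag_mor w0 d1 = diag_mor w0 d2)
  (wf1 : diag_wf sg w0 d1 = true) (wf2 : diag_wf sg w0 d2 = true)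
  (out12 : diag_out sg w0 d1 = diag_out sg w0 d2).

Lemma diag_replace_sound w i k j d :
  diag_wf sg w d = true -> diag_match sg w0 w i k j d1 d = true ->
  diag_mor w d = diag_mor w (diag_replace sg i k j d1 d2 d).
Proof.
  intros wfd m. unfold diag_match in m. apply andb_prop in m as [m1 m2].
  apply diagram_eqb_eq in m1. apply Nat.eqb_eq in m2.
  set (pre := firstn i d) in *. set (post := skipn (i + length d1) d).
  assert (d_split : d = pre ++ map (layer_shift sg k j) d1 ++ post).
  { rewrite <- m1. unfold pre, post.
    rewrite <- (firstn_skipn i d) at 1. f_equal.
    rewrite <- (firstn_skipn (length d1) (skipn i d)) at 1. f_equal.
    rewrite skipn_skipn, Nat.add_comm; auto. }
  unfold diag_replace; fold pre post.
  rewrite d_split, !diag_wf_app, m2 in wfd.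
  apply andb_prop in wfd as [wpre wfd]. apply andb_prop in wfd as [_ wpost].
  rewrite diag_out_shift in wpost.
  assert (wfd1 : diag_wf sg w (pre ++ map (layer_shift sg k j) d1 ++ post) = true).
  { rewrite !diag_wf_app, m2, diag_wf_shift, diag_out_shift, wpre, wpost; auto. }
  assert (wfd2 : diag_wf sg w (pre ++ map (layer_shift sg k j) d2 ++ post) = true).
  { rewrite !diag_wf_app, m2, diag_wf_shift, diag_out_shift, <- out12, wpre, wpost; auto. }
  rewrite d_split at 1. rewrite (diag_mor_app3 _ _ _ _ wfd1), (diag_mor_app3 _ _ _ _ wfd2).
  rewrite m2, !diag_out_shift, out12, !diag_mor_shift, d12 by auto. auto.
Qed.

Lemma diag_rewrite_sound w d occ : diag_wf sg w d = true ->
  diag_mor w d = diag_mor w (diag_rewrite sg w0 w d1 d2 d occ).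
Proof.
  intros wfd. unfold diag_rewrite.
  destruct (diag_find sg w0 w d1 d occ 0 (S (length d))) as [[[i k] j]|] eqn:E; auto.
  apply diag_find_match in E. apply diag_replace_sound; auto.
Qed.

Lemma diag_insert_sound w i k j d : diag_wf sg w d = true ->
  diag_mor w d = diag_mor w (diag_insert sg w0 w i k j d1 d2 d).
Proof.
  intros wfd. unfold diag_insert.
  destruct (diag_match sg w0 w i k j d1 d) eqn:E; auto using diag_replace_sound.
Qed.

End Rewriting.

Lemma interchange_layers_sound x1 x2 y1 y2 :
  layer_out sg x1 = layer_in sg x2 -> interchange_layers sg x1 x2 = Some (y1, y2) ->
  comp (layer_mor x2) (layer_mor x1) = comp (layer_mor y2) (layer_mor y1)
  /\ layer_out sg y1 = layer_in sg y2 /\ layer_out sg y2 = layer_out sg x2.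
Proof.
  destruct x1 as [[k1 a1] j1], x2 as [[k2 a2] j2]; simpl. intros hw.
  destruct (k1 + arity_out a1 <=? k2) eqn:c1; [|destruct (k2 + arity_in a2 <=? k1) eqn:c2];
    intros h; inversion h; subst; clear h.
  - apply Nat.leb_le in c1. set (g := k2 - (k1 + arity_out a1)) in *.
    assert (E1 : k2 = k1 + (arity_out a1 + g)) by (unfold g; lia).
    assert (E2 : j1 = g + (arity_in a2 + j2)) by (unfold g; lia).
    clearbody g. subst k2 j1. simpl. split; [|lia]. split_idm.
    repeat (rewrite interchange; [|typecheck|typecheck]).
    repeat rewrite comp_idm_l by typecheck. repeat rewrite comp_idm_r by typecheck. auto.
  - apply Nat.leb_le in c2. set (g := k1 - (k2 + arity_in a2)) in *.
    assert (E1 : k1 = k2 + (arity_in a2 + g)) by (unfold g; lia).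
    assert (E2 : j2 = g + (arity_out a1 + j1)) by (unfold g; lia).
    clearbody g. subst k1 j2. simpl. split; [|lia]. split_idm.
    repeat (rewrite interchange; [|typecheck|typecheck]).
    repeat rewrite comp_idm_l by typecheck. repeat rewrite comp_idm_r by typecheck. auto.
Qed.

Lemma diag_swap_sound w d i : diag_wf sg w d = true -> diag_mor w d = diag_mor w (diag_swap sg i d).
Proof.
  revert w i; induction d as [|x d IH]; intros w i h; destruct i; simpl; auto.
  - destruct d as [|x2 d]; auto.
    destruct (interchange_layers sg x x2) as [[y1 y2]|] eqn:E; auto.
    simpl in h. apply andb_prop in h as [_ h]. apply andb_prop in h as [h2 h3].
    apply Nat.eqb_eq in h2.
    destruct (interchange_layers_sound _ _ _ _ (eq_sym h2) E) as [Q [Q2 Q3]].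
    cbn [diag_mor]. rewrite Q3.
    destruct (diag_mor_typed _ _ h3) as [t1 t2].
    rewrite <- !comp_assoc by (rewrite ?cod_layer_mor, ?dom_layer_mor, ?t1; auto).
    rewrite Q; auto.
  - simpl in h. apply andb_prop in h as [_ h2]. rewrite (IH _ i) by auto. auto.
Qed.

End DiagramSemantics.

Inductive hopf_gen := gmu | geta | gDelta | geps | gs | gLam | glam | gsym.

Definition hopf_gen_eqb (a b : hopf_gen) : bool :=
  match a, b with
  | gmu, gmu | geta, geta | gDelta, gDelta | geps, geps | gs, gs
  | gLam, gLam | glam, glam | gsym, gsym => true
  | _, _ => false end.

Lemma hopf_gen_eqb_eq a b : hopf_gen_eqb a b = true -> a = b.
Proof. destruct a, b; easy. Qed.

Definition hopf_sig : signature := {|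
  gen := hopf_gen;
  gen_eqb := hopf_gen_eqb;
  gen_eqb_eq := hopf_gen_eqb_eq;
  arity_in := fun a => match a with
    | gmu | gsym => 2 | geta | gLam => 0 | gDelta | geps | gs | glam => 1 end;
  arity_out := fun a => match a with
    | gDelta | gsym => 2 | geps | glam => 0 | gmu | geta | gs | gLam => 1 end |}.

Section IntegralHopf.
Variables (C : SSMC) (H : ob C) (mu eta Delta eps s Lam lam : mor C).
Hypotheses (dom_mu : dom mu = tens_ob H H) (cod_mu : cod mu = H)
  (dom_eta : dom eta = unit_ob) (cod_eta : cod eta = H)
  (dom_Delta : dom Delta = H) (cod_Delta : cod Delta = tens_ob H H)
  (dom_eps : dom eps = H) (cod_eps : cod eps = unit_ob)
  (dom_s : dom s = H) (cod_s : cod s = H)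
  (dom_Lam : dom Lam = unit_ob) (cod_Lam : cod Lam = H)
  (dom_lam : dom lam = H) (cod_lam : cod lam = unit_ob).
Hypotheses
  (mu_assoc : comp mu (tens mu (idm H)) = comp mu (tens (idm H) mu))
  (mu_unit_l : comp mu (tens eta (idm H)) = idm H)
  (mu_unit_r : comp mu (tens (idm H) eta) = idm H)
  (Delta_coassoc : comp (tens Delta (idm H)) Delta = comp (tens (idm H) Delta) Delta)
  (Delta_counit_l : comp (tens eps (idm H)) Delta = idm H)
  (Delta_counit_r : comp (tens (idm H) eps) Delta = idm H)
  (Delta_mu : comp Delta mu
     = comp (tens mu mu) (comp (tens (idm H) (tens (sym H H) (idm H))) (tens Delta Delta)))
  (Delta_eta : comp Delta eta = tens eta eta)
  (eps_eta : comp eps eta = idm unit_ob)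
  (antipode_l : comp mu (comp (tens s (idm H)) Delta) = comp eta eps)
  (antipode_r : comp mu (comp (tens (idm H) s) Delta) = comp eta eps)
  (cointegral : comp mu (tens Lam (idm H)) = comp Lam eps)
  (integral : comp (tens (idm H) lam) Delta = comp eta lam)
  (lam_Lam : comp lam Lam = idm unit_ob).

Definition hopf_mor (a : hopf_gen) : mor C :=
  match a with
  | gmu => mu | geta => eta | gDelta => Delta | geps => eps | gs => s
  | gLam => Lam | glam => lam | gsym => sym H H end.

Lemma dom_hopf_mor a : dom (hopf_mor a) = tpow H (@arity_in hopf_sig a).
Proof. destruct a; simpl; auto. apply dom_sym. Qed.

Lemma cod_hopf_mor a : cod (hopf_mor a) = tpow H (@arity_out hopf_sig a).
Proof. destruct a; simpl; auto. apply cod_sym. Qed.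

Local Notation dg := (diag_mor C H hopf_sig hopf_mor).

(* [dexpand R i k j] inserts the left side of [R : dg _ d = dg _ []] after the first [i]
   layers, with [k] extra wires on its left and [j] on its right; [dslide [i; ...]]
   interchanges the layers at positions [i] and [i + 1], in turn. *)
Ltac dnorm := match goal with |- dg ?w ?d = dg ?w' ?d' =>
  let x := eval vm_compute in d in let y := eval vm_compute in d' in
  change (dg w x = dg w' y) end.
Ltac drw_at R occ := match goal with |- dg ?w ?d = _ =>
  rewrite (diag_rewrite_sound C H hopf_sig hopf_mor dom_hopf_mor cod_hopf_mor _ _ _ R
             eq_refl eq_refl eq_refl w d occ eq_refl); dnorm end.
Ltac drw R := drw_at R 0.
Ltac drw_back R := drw_at (eq_sym R) 0.
Ltac dexpand R i k j := match goal with |- dg ?w ?d = _ =>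
  rewrite (diag_insert_sound C H hopf_sig hopf_mor dom_hopf_mor cod_hopf_mor _ _ _ (eq_sym R)
             eq_refl eq_refl eq_refl w i k j d eq_refl); dnorm end.
Ltac dslide l := match l with
  | nil => idtac
  | cons ?i ?l' => match goal with |- dg ?w ?d = _ =>
      rewrite (diag_swap_sound C H hopf_sig hopf_mor dom_hopf_mor cod_hopf_mor w d i eq_refl);
      dnorm end;
    dslide l' end.

Ltac typecheck := repeat first [
    match goal with h : dom ?f = _ |- context [dom ?f] => rewrite h end
  | match goal with h : cod ?f = _ |- context [cod ?f] => rewrite h end
  | rewrite dom_tens | rewrite cod_tens | rewrite dom_id | rewrite cod_id
  | rewrite dom_sym | rewrite cod_sym
  | match goal with |- context [dom (comp ?g ?f)] => rewrite (dom_comp f g) by typecheck end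
  | match goal with |- context [cod (comp ?g ?f)] => rewrite (cod_comp f g) by typecheck end ];
  repeat rewrite ?tens_ob_assoc, ?tens_ob_unit_l, ?tens_ob_unit_r; reflexivity.
Ltac reassoc := repeat rewrite <- comp_assoc by typecheck.
Ltac unfold_dg := cbn [diag_mor layer_mor layer_out layer_in hopf_mor tpow arity_out arity_in
    hopf_sig Nat.add];
  repeat first [rewrite tens_unit_l | rewrite tens_unit_r | rewrite comp_idm_l by typecheck
    | rewrite comp_idm_r by typecheck].

Lemma dg_mu_assoc : dg 3 [(0,gmu,1);(0,gmu,0)] = dg 3 [(1,gmu,0);(0,gmu,0)].
Proof. unfold_dg. auto. Qed.
Lemma dg_unit_l : dg 1 [(0,geta,1);(0,gmu,0)] = dg 1 [].
Proof. unfold_dg. auto. Qed.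
Lemma dg_unit_r : dg 1 [(1,geta,0);(0,gmu,0)] = dg 1 [].
Proof. unfold_dg. auto. Qed.
Lemma dg_coassoc : dg 1 [(0,gDelta,0);(0,gDelta,1)] = dg 1 [(0,gDelta,0);(1,gDelta,0)].
Proof. unfold_dg. auto. Qed.
Lemma dg_counit_l : dg 1 [(0,gDelta,0);(0,geps,1)] = dg 1 [].
Proof. unfold_dg. auto. Qed.
Lemma dg_counit_r : dg 1 [(0,gDelta,0);(1,geps,0)] = dg 1 [].
Proof. unfold_dg. auto. Qed.
Lemma dg_antipode_l : dg 1 [(0,gDelta,0);(0,gs,1);(0,gmu,0)] = dg 1 [(0,geps,0);(0,geta,0)].
Proof. unfold_dg. rewrite <- antipode_l. symmetry; apply comp_assoc; typecheck. Qed.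
Lemma dg_antipode_r : dg 1 [(0,gDelta,0);(1,gs,0);(0,gmu,0)] = dg 1 [(0,geps,0);(0,geta,0)].
Proof. unfold_dg. rewrite <- antipode_r. symmetry; apply comp_assoc; typecheck. Qed.
Lemma dg_cointegral : dg 1 [(0,gLam,1);(0,gmu,0)] = dg 1 [(0,geps,0);(0,gLam,0)].
Proof. unfold_dg. auto. Qed.
Lemma dg_integral : dg 1 [(0,gDelta,0);(1,glam,0)] = dg 1 [(0,glam,0);(0,geta,0)].
Proof. unfold_dg. auto. Qed.
Lemma dg_lam_Lam : dg 0 [(0,gLam,0);(0,glam,0)] = dg 0 [].
Proof. unfold_dg. auto. Qed.
Lemma dg_eps_eta : dg 0 [(0,geta,0);(0,geps,0)] = dg 0 [].
Proof. unfold_dg. auto. Qed.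
Lemma dg_Delta_eta : dg 0 [(0,geta,0);(0,gDelta,0)] = dg 0 [(0,geta,0);(1,geta,0)].
Proof. unfold_dg. rewrite Delta_eta, tens_split_r, cod_eta, dom_eta, tens_unit_r. auto. Qed.
Lemma dg_Delta_mu : dg 2 [(0,gmu,0);(0,gDelta,0)]
  = dg 2 [(1,gDelta,0);(0,gDelta,2);(1,gsym,1);(0,gmu,2);(1,gmu,0)].
Proof.
  unfold_dg. rewrite Delta_mu, (tens_split_r mu mu), cod_mu, dom_mu,
    (tens_split_l Delta Delta), cod_Delta, dom_Delta.
  reassoc. auto.
Qed.

Lemma dg_sym_inv : dg 2 [(0,gsym,0);(0,gsym,0)] = dg 2 [].
Proof. unfold_dg. apply sym_inv. Qed.
Lemma dg_sym_Lam : dg 1 [(0,gLam,1);(0,gsym,0)] = dg 1 [(1,gLam,0)].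
Proof. unfold_dg. assert (e := sym_point_l Lam H dom_Lam). rewrite cod_Lam in e. auto. Qed.
Lemma dg_sym_lam_r : dg 2 [(0,gsym,0);(1,glam,0)] = dg 2 [(0,glam,1)].
Proof. unfold_dg. assert (e := sym_copoint_r lam H cod_lam). rewrite dom_lam in e. auto. Qed.
Lemma dg_sym_lam_l : dg 2 [(0,gsym,0);(0,glam,1)] = dg 2 [(1,glam,0)].
Proof. unfold_dg. assert (e := sym_copoint_l lam H cod_lam). rewrite dom_lam in e. auto. Qed.
Lemma dg_sym_s_l : dg 2 [(0,gs,1);(0,gsym,0)] = dg 2 [(0,gsym,0);(1,gs,0)].
Proof.
  unfold_dg. assert (nat := sym_nat s (idm H)).
  rewrite dom_s, cod_s, cod_id, dom_id in nat. auto.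
Qed.
Lemma dg_sym_s_r : dg 2 [(1,gs,0);(0,gsym,0)] = dg 2 [(0,gsym,0);(0,gs,1)].
Proof.
  unfold_dg. assert (nat := sym_nat (idm H) s).
  rewrite dom_s, cod_s, cod_id, dom_id in nat. auto.
Qed.

Lemma dg_sym_beta :
  dg 3 [(1,gmu,0);(1,glam,0)] = dg 3 [(0,gsym,1);(1,gsym,0);(0,gmu,1);(0,glam,1)].
Proof.
  unfold_dg. assert (e := sym_copoint_l (comp lam mu) H).
  rewrite dom_comp, dom_mu, sym_hex in e by congruence.
  rewrite interchange, interchange, (comp_idm_l H) by typecheck.
  rewrite <- e by typecheck. reassoc. auto.
Qed.

Lemma dg_sym_Delta : dg 2 [(1,gDelta,0);(0,gsym,1);(1,gsym,0)] = dg 2 [(0,gsym,0);(0,gDelta,1)].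
Proof.
  unfold_dg. assert (e := sym_nat (idm H) Delta).
  rewrite cod_id, dom_id, cod_Delta, dom_Delta, sym_hex in e.
  rewrite <- e. reassoc. auto.
Qed.

Lemma dg_Delta_sym : dg 2 [(0,gsym,0);(1,gDelta,0);(0,gsym,1)] = dg 2 [(0,gDelta,1);(1,gsym,0)].
Proof. dexpand dg_sym_inv 3 1 0. drw dg_sym_Delta. drw dg_sym_inv. reflexivity. Qed.

(* [T : x |-> Lam_1 lam(Lam_2 x)], the inverse of the antipode. *)
Definition cointegral_pairing : diagram hopf_sig := [(0,gLam,1);(0,gDelta,1);(1,gmu,0);(1,glam,0)].

(* [Lam_1 x (x) Lam_2 = Lam_1 (x) Lam_2 S(x)] *)
Lemma cointegral_mul_slide :
  dg 1 [(0,gLam,1);(0,gDelta,1);(1,gsym,0);(0,gmu,1)]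
  = dg 1 [(0,gLam,1);(0,gDelta,1);(2,gs,0);(1,gmu,0)].
Proof.
  symmetry. dexpand dg_counit_l 0 0 0. drw_back dg_cointegral. drw dg_Delta_mu.
  dslide [6;5;4;3;2;1]. drw dg_mu_assoc. dslide [1;0;2]. drw dg_coassoc.
  dslide [6;5;4]. drw dg_antipode_r. drw dg_counit_r. dslide [1;2;3]. drw dg_unit_r.
  reflexivity.
Qed.

(* Expanding [lam(Lam_2 x)] by the integral property to [(Lam_2 x)_1 lam((Lam_2 x)_2)],
   the antipode axiom collapses [S(Lam_1 lam(Lam_2 x))] to [x_1 lam(Lam x_2) = x]. *)
Lemma antipode_comp_pairing : dg 1 (cointegral_pairing ++ [(0,gs,0)]) = dg 1 [].
Proof.
  dnorm. dslide [3;2]. dexpand dg_unit_r 5 0 0. drw_back dg_integral. drw dg_Delta_mu.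
  dslide [8;7]. drw_back dg_mu_assoc. dslide [3;2]. drw_back dg_coassoc. dslide [5;4].
  drw dg_antipode_l. drw dg_counit_l. dslide [0;1]. drw dg_sym_Lam. dslide [2;0].
  drw dg_unit_l. drw dg_cointegral. drw dg_lam_Lam. drw dg_counit_r. reflexivity.
Qed.

Lemma pairing_comp_antipode : dg 1 ((0,gs,0) :: cointegral_pairing) = dg 1 [].
Proof.
  dnorm. dslide [0;1]. drw_back cointegral_mul_slide. dslide [3]. drw dg_sym_lam_r.
  drw dg_integral. drw dg_lam_Lam. drw dg_unit_l. reflexivity.
Qed.

(* [T(S(x) y) = T(y) x] *)
Lemma pairing_mul_antipode :
  dg 2 ((0,gs,1) :: (0,gmu,0) :: cointegral_pairing)
  = dg 2 ((0,gsym,0) :: map (layer_shift hopf_sig 0 1) cointegral_pairing ++ [(0,gmu,0)]).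
Proof.
  dnorm. dslide [1;0;2;1]. drw_back dg_mu_assoc. drw_back cointegral_mul_slide.
  dslide [3;4]. drw dg_sym_beta. drw dg_sym_inv. dslide [1;0]. reflexivity.
Qed.

Lemma antipode_antimultiplicative :
  dg 2 [(0,gmu,0);(0,gs,0)] = dg 2 [(0,gsym,0);(0,gs,1);(1,gs,0);(0,gmu,0)].
Proof.
  symmetry. dexpand antipode_comp_pairing 4 0 0. dslide [1]. drw pairing_mul_antipode.
  drw dg_sym_s_r. drw dg_sym_inv. drw pairing_comp_antipode. reflexivity.
Qed.

(* [y_1 lam(x y_2) = S(x_1) lam(x_2 y)] *)
Lemma integral_mul_slide :
  dg 2 [(1,gDelta,0);(0,gsym,1);(1,gmu,0);(1,glam,0)]
  = dg 2 [(0,gDelta,1);(0,gs,2);(1,gmu,0);(1,glam,0)].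
Proof.
  symmetry. dexpand dg_unit_r 4 0 0. drw_back dg_integral. drw dg_Delta_mu.
  dslide [7;6]. drw_back dg_mu_assoc. dslide [2;1]. drw_back dg_coassoc. dslide [4;3].
  drw dg_antipode_l. drw dg_counit_l. dslide [0;1]. drw dg_unit_l. reflexivity.
Qed.

(* [T(x)_1 (x) S(T(x)_2) = T(x_2) (x) x_1] *)
Lemma pairing_comul_antipode :
  dg 1 (cointegral_pairing ++ [(0,gDelta,0);(1,gs,0)])
  = dg 1 ((0,gDelta,0) :: (0,gsym,0) :: map (layer_shift hopf_sig 0 1) cointegral_pairing).
Proof.
  dnorm. dslide [3;2;4;3]. drw dg_coassoc. drw_back integral_mul_slide. dslide [1;0].
  drw dg_sym_beta. drw dg_sym_inv. dslide [2;1]. reflexivity.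
Qed.

Lemma antipode_anticomultiplicative :
  dg 1 [(0,gs,0);(0,gDelta,0)] = dg 1 [(0,gDelta,0);(0,gsym,0);(0,gs,1);(1,gs,0)].
Proof.
  dexpand dg_sym_inv 2 0 0. dexpand antipode_comp_pairing 3 0 1.
  drw_back pairing_comul_antipode. drw pairing_comp_antipode. drw dg_sym_s_l. drw dg_sym_s_r.
  reflexivity.
Qed.

Lemma antipode_unit : dg 0 [(0,geta,0);(0,gs,0)] = dg 0 [(0,geta,0)].
Proof.
  dexpand dg_unit_r 2 0 0. dslide [1]. drw_back dg_Delta_eta. drw dg_antipode_l.
  drw dg_eps_eta. reflexivity.
Qed.

(* [Lam_1 lam(S(Lam_2)) = lam(S(Lam)) 1] *)
Lemma cointegral_antipode_lam :
  dg 0 [(0,gLam,0);(0,gDelta,0);(0,gs,1);(0,glam,1)]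
  = dg 0 [(0,gLam,0);(0,gs,0);(0,glam,0);(0,geta,0)].
Proof.
  dexpand pairing_comp_antipode 4 0 0. dslide [3]. dexpand dg_sym_inv 2 0 0.
  drw_back dg_sym_s_r. drw_at (eq_sym dg_sym_s_l) 1. dslide [3].
  drw_back antipode_anticomultiplicative. drw dg_sym_lam_l. drw dg_integral.
  drw_back antipode_unit. drw pairing_comp_antipode. reflexivity.
Qed.

Lemma snake_gamma_beta :
  comp (tens (idm H) (beta C mu lam)) (tens (gamma C H Delta s Lam) (idm H)) = idm H.
Proof.
  transitivity (dg 1 [(0,gLam,1);(0,gDelta,1);(0,gs,2);(1,gmu,0);(1,glam,0)]).
  - unfold beta, gamma. unfold_dg.
    rewrite tens_idm_comp_l by typecheck. rewrite !tens_idm_comp_r by typecheck.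
    rewrite tens_assoc, tens_id. reassoc. auto.
  - change (idm H) with (dg 1 []). dslide [2;3]. exact antipode_comp_pairing.
Qed.

(* [lam(x S(Lam_1)) Lam_2 = lam(S(Lam)) x] *)
Lemma beta_gamma_scalar :
  dg 1 [(1,gLam,0);(1,gDelta,0);(1,gs,1);(0,gmu,1);(0,glam,1)]
  = dg 1 [(0,gLam,1);(0,gs,1);(0,glam,1)].
Proof.
  dexpand antipode_comp_pairing 0 0 0. dslide [4;5]. dexpand dg_sym_inv 6 0 1.
  drw_back antipode_antimultiplicative. drw_back dg_sym_Lam. drw dg_Delta_sym.
  drw cointegral_mul_slide. dslide [7;6;8;7]. drw cointegral_antipode_lam. dslide [7].
  drw dg_unit_l. dslide [3;2;1;0;4;3;2;1;5;4;3;2]. drw antipode_comp_pairing. reflexivity.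
Qed.

Lemma snake_beta_gamma :
  comp (tens (beta C mu lam) (idm H)) (tens (idm H) (gamma C H Delta s Lam))
  = tens (comp lam (comp s Lam)) (idm H).
Proof.
  transitivity (dg 1 [(1,gLam,0);(1,gDelta,0);(1,gs,1);(0,gmu,1);(0,glam,1)]).
  { unfold beta, gamma. unfold_dg.
    rewrite tens_idm_comp_r by typecheck. rewrite !tens_idm_comp_l by typecheck. reassoc. auto. }
  rewrite beta_gamma_scalar. unfold_dg. rewrite !tens_idm_comp_r by typecheck. reassoc. auto.
Qed.

Lemma nondegenerate_iff :
  nondegenerate C H mu Delta s Lam lam <-> comp lam (comp s Lam) = idm unit_ob.
Proof.
  unfold nondegenerate. rewrite snake_gamma_beta, snake_beta_gamma. split.
  - intros [_ h]. apply (scalar_idm_of_tens_idm _ H eta eps); typecheck || auto.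
  - intros ->. split; [reflexivity | apply tens_unit_l].
Qed.

End IntegralHopf.

Theorem mainTheorem2 (C : SSMC) (H : ob C) (mu eta Delta eps s Lam lam : mor C) :
  is_integral_hopf_algebra C H mu eta Delta eps s Lam lam ->
  (nondegenerate C H mu Delta s Lam lam <->
   comp lam (comp s Lam) = idm (@unit_ob C)).
Proof.
  intros [[typing axioms] [[[dL cL] coint] [[[dl cl] int] norm]]].
  destruct typing as [[dm cm] [[dn cn] [[dD cD] [[de ce] [ds cs]]]]].
  destruct axioms as [assoc [unit_l [unit_r [coassoc [counit_l [counit_r
    [bialg [Delta_eta [_ [eps_eta [antipode_l antipode_r]]]]]]]]]]].
  apply (nondegenerate_iff C H mu eta Delta eps s Lam lam); assumption.
Qed.
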